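(* In any monoid admitting a $C(2)$ presentation, the set of non-identity indecomposable elements is a generating set for the monoid, and it is contained in every generating set for the monoid.
   Context: A monoid presentation $\langle \mathscr{A} \mid \mathscr{R} \rangle$ consists of an alphabet $\mathscr{A}$ and a set $\mathscr{R} \subseteq \mathscr{A}^* \times \mathscr{A}^*$ of relations; the monoid presented is the quotient of the free monoid $\mathscr{A}^*$ by the smallest congruence containing $\mathscr{R}$. A relation word is a word occurring as one side of a relation. A piece is a word which occurs as a factor of two distinct relation words, or in two different (possibly overlapping) positions within one relation word; the empty word is always a piece. The presentation is $C(2)$ if no relation word can be written as a product of strictly fewer than $2$ pieces (i.e. no relation word is empty or is itself a piece). A non-identity element $s$ of a monoid is indecomposable if whenever $xy = s$ we have $x = 1$ or $y = 1$. *)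

From mathcomp Require Import all_boot.
Set Implicit Arguments. Unset Strict Implicit. Unset Printing Implicit Defensive.

Fixpoint all_prop (T : Type) (P : T -> Prop) (l : seq T) : Prop :=
  if l is x :: l' then P x /\ all_prop P l' else True.
 

Section Presentations.
Variable A : Type.
Variable R : seq A * seq A -> Prop.

(* The smallest congruence on A^* containing R: equivalence closure of
   one-step rewriting  u l v  <->  u r v  for (l, r) in R. *)
Inductive pres_cong : seq A -> seq A -> Prop :=
| pc_step (u v l r : seq A) : R (l, r) -> pres_cong (u ++ l ++ v) (u ++ r ++ v)
| pc_refl (w : seq A) : pres_cong w w
| pc_sym (w1 w2 : seq A) : pres_cong w1 w2 -> pres_cong w2 w1
| pc_trans (w1 w2 w3 : seq A) : pres_cong w1 w2 -> pres_cong w2 w3 -> pres_cong w1 w3.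

Definition relation_word (w : seq A) : Prop :=
  exists w', R (w, w') \/ R (w', w).

Definition occurs_at (p r : seq A) (i : nat) : Prop :=
  exists u v, r = u ++ p ++ v /\ size u = i.

Definition piece (p : seq A) : Prop :=
  p = [::] \/
  exists r1 r2 i j, relation_word r1 /\ relation_word r2 /\
    occurs_at p r1 i /\ occurs_at p r2 j /\ (r1 <> r2 \/ i <> j).

Definition small_cancellation (n : nat) : Prop :=
  forall (w : seq A) (ps : seq (seq A)),
    relation_word w -> all_prop piece ps -> flatten ps = w -> n <= size ps.
End Presentations.

Definition is_monoid (M : Type) (mul : M -> M -> M) (one : M) : Prop :=
  (forall x y z, mul x (mul y z) = mul (mul x y) z) /\
  (forall x, mul one x = x) /\ (forall x, mul x one = x).

Definition presents (A M : Type) (mul : M -> M -> M) (one : M)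
  (R : seq A * seq A -> Prop) : Prop :=
  exists phi : seq A -> M,
    phi [::] = one /\
    (forall u v, phi (u ++ v) = mul (phi u) (phi v)) /\
    (forall m, exists w, phi w = m) /\
    (forall u v, phi u = phi v <-> pres_cong R u v).

Definition generates (M : Type) (mul : M -> M -> M) (one : M) (S : M -> Prop) : Prop :=
  forall m, exists l : seq M, all_prop S l /\ foldr mul one l = m.

Definition indecomposable (M : Type) (mul : M -> M -> M) (one : M) (s : M) : Prop :=
  s <> one /\ forall x y, mul x y = s -> x = one \/ y = one.

(* In a C(2) presentation no relation word is a factor of another one at a
   different place, and no relation word is empty.  Hence the set of words that
   are a single letter or a relation word is a union of congruence classes, and
   the class of a letter that is not a relation word is a singleton.  Letters of
   relation words of length at least 2 are not relation words (they would be
   pieces), so they map to indecomposable elements.  A letter whose image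
   decomposes nontrivially is congruent to a word of length at least 2, which
   must then be a relation word, and so is a product of indecomposables.
   Conversely an indecomposable element written as a product of generators
   must be one of them. *)

From Stdlib Require Import Classical_Prop.
From mathcomp Require Import all_boot.

Set Implicit Arguments.
Unset Strict Implicit.
Unset Printing Implicit Defensive.

Lemma cat3_nil (A : Type) (u l v : seq A) :
  size (u ++ l ++ v) <= size l -> u = [::] /\ v = [::].
Proof.
rewrite !size_cat addnCA -{2}[size l]addn0 leq_add2l leqn0 addn_eq0.
by case/andP => /nilP -> /nilP ->.
Qed.

Section SmallCancellation.
Variables (A : Type) (R : seq A * seq A -> Prop).
Hypothesis HC : small_cancellation R 2.

Lemma relation_word_neq_nil w : relation_word R w -> w <> [::].
Proof.
by move=> Hw Ew; have := HC Hw (I : all_prop (piece R) [::]); rewrite Ew => /(_ erefl).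
Qed.

Lemma relation_word_not_piece w : relation_word R w -> ~ piece R w.
Proof.
by move=> Hw Hp; have := HC (ps := [:: w]) Hw (conj Hp I); rewrite /= cats0 => /(_ erefl).
Qed.

Lemma pres_cong_invariant (P : seq A -> Prop) :
  (forall u v l l', relation_word R l -> relation_word R l' ->
     P (u ++ l ++ v) -> P (u ++ l' ++ v)) ->
  forall w1 w2, pres_cong R w1 w2 -> (P w1 <-> P w2).
Proof.
move=> HP w1 w2; elim=> {w1 w2}
  [u v l r Hlr | w | w1 w2 _ [? ?] | w1 w2 w3 _ [? ?] _ [? ?]]; try by split; auto.
have Hl : relation_word R l by exists r; left.
have Hr : relation_word R r by exists l; right.
by split; apply: HP.
Qed.

Lemma relation_word_factor_eq u p v :
  relation_word R (u ++ p ++ v) -> relation_word R p -> u ++ p ++ v = p.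
Proof.
move=> Hw Hp; apply: NNPP => Hneq; apply: (relation_word_not_piece Hp); right.
exists (u ++ p ++ v), p, (size u), 0; split=> //; split=> //; split; [|split].
- by exists u, v.
- by exists [::], [::]; rewrite cats0.
- by left.
Qed.

Definition letter_or_relation_word (w : seq A) : Prop :=
  (exists x, w = [:: x]) \/ relation_word R w.

Lemma relation_word_factor u l v :
  relation_word R l -> letter_or_relation_word (u ++ l ++ v) ->
  u = [::] /\ v = [::].
Proof.
move=> Hl [[x Ex] | Hw]; apply: (@cat3_nil _ u l v).
  by rewrite Ex; case: l Hl {Ex} => [/relation_word_neq_nil/(_ erefl) |].
by rewrite (relation_word_factor_eq Hw Hl).
Qed.

Lemma letter_or_relation_word_cong w1 w2 :
  pres_cong R w1 w2 -> letter_or_relation_word w1 -> letter_or_relation_word w2.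
Proof.
move=> Hw; apply: (proj1 (pres_cong_invariant _ Hw)) => u v l l' Hl Hl' H.
by case: (relation_word_factor Hl H) => -> ->; right; rewrite cats0.
Qed.

Lemma letter_cong x w :
  ~ relation_word R [:: x] -> pres_cong R [:: x] w -> w = [:: x].
Proof.
move=> Hx Hw; apply: (proj1 (pres_cong_invariant (P := eq^~ [:: x]) _ Hw)) => //.
move=> u v l l' Hl _ E.
have [Eu Ev] := relation_word_factor Hl (or_introl (ex_intro _ x E)).
by move: E Hl; rewrite Eu Ev /= cats0 => -> /Hx.
Qed.

Lemma letter_of_long_relation_word s1 x s2 :
  relation_word R (s1 ++ x :: s2) -> 1 < size (s1 ++ x :: s2) ->
  ~ relation_word R [:: x].
Proof.
move=> Hr Hsz /(relation_word_factor_eq (u := s1) (p := [:: x]) (v := s2) Hr) E.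
by rewrite E in Hsz.
Qed.

End SmallCancellation.

Section Monoid.
Variables (M : Type) (mul : M -> M -> M) (one : M).
Hypothesis HM : is_monoid mul one.

Definition generated (S : M -> Prop) (m : M) : Prop :=
  exists l : seq M, all_prop S l /\ foldr mul one l = m.

Lemma generated_one S : generated S one.
Proof. by exists [::]. Qed.

Lemma generated_gen (S : M -> Prop) s : S s -> generated S s.
Proof. by case: HM => _ [_ mul1r] Ss; exists [:: s]; rewrite /= mul1r. Qed.

Lemma generated_mul S x y : generated S x -> generated S y -> generated S (mul x y).
Proof.
case: HM => mulA [mul1l _] [lx [Slx <-]] [ly [Sly <-]].
exists (lx ++ ly); split; elim: lx Slx => [|z lx IH] //= [Sz /IH].
- by [].
- by move=> ->; rewrite mulA.
Qed.

Lemma indecomposable_generated S s :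
  generated S s -> indecomposable mul one s -> S s.
Proof.
case=> l [Sl <-]; elim: l Sl => [_ [/(_ erefl)] // | x l IH] /= [Sx Sl] [Hs1 Hs].
case: HM => _ [mul1l mulr1].
case: (Hs x (foldr mul one l) erefl) => Ex; last by rewrite Ex mulr1.
by rewrite Ex mul1l in Hs1 Hs *; apply: IH.
Qed.

Lemma one_or_indecomposable_or_split s :
  s = one \/ indecomposable mul one s \/
  exists p q, p <> one /\ q <> one /\ mul p q = s.
Proof.
case: (classic (s = one)) => [| Hs1]; [by left | right].
case: (classic (exists p q, p <> one /\ q <> one /\ mul p q = s)) => [| Hsplit];
  [by right | left].
split=> // p q Epq; apply: NNPP => Hpq; apply: Hsplit.
by exists p, q; split; [|split=> //]; apply: contra_not Hpq; [left | right].
Qed.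

End Monoid.

Section Presented.
Variables (M : Type) (mul : M -> M -> M) (one : M).
Hypothesis HM : is_monoid mul one.
Variables (A : Type) (R : seq A * seq A -> Prop).
Hypothesis HC : small_cancellation R 2.
Variable phi : seq A -> M.
Hypotheses (phi_nil : phi [::] = one)
  (phi_cat : forall u v, phi (u ++ v) = mul (phi u) (phi v))
  (phi_surj : forall m, exists w, phi w = m)
  (phi_cong : forall u v, phi u = phi v -> pres_cong R u v).

Lemma generated_phi S w :
  (forall s1 x s2, w = s1 ++ x :: s2 -> generated mul one S (phi [:: x])) ->
  generated mul one S (phi w).
Proof.
suff: forall s1,
    (forall s1' x s2, s1 ++ w = s1' ++ x :: s2 -> generated mul one S (phi [:: x])) ->
    generated mul one S (phi w)
  by move=> H Hw; apply: (H [::]).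
elim: w => [|x w IH] s1 Hw; first by rewrite phi_nil; apply: generated_one.
rewrite -cat1s phi_cat; apply: generated_mul => //; first exact: (Hw s1 x w).
by apply: (IH (rcons s1 x)) => s1' y s2; rewrite cat_rcons; apply: Hw.
Qed.

Lemma phi_letter_indecomposable x :
  ~ relation_word R [:: x] -> indecomposable mul one (phi [:: x]).
Proof.
move=> Hx; split.
  by rewrite -phi_nil => /phi_cong/(letter_cong HC Hx).
move=> p q Epq; case: (phi_surj p) => u Hu; case: (phi_surj q) => v Hv.
have : phi [:: x] = phi (u ++ v) by rewrite phi_cat Hu Hv.
move/phi_cong/(letter_cong HC Hx).
case: u Hu => [|? u] Hu; first by left; rewrite -Hu.
case: v Hv => [|? v] Hv; first by right; rewrite -Hv.
by case: u {Hu}.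
Qed.

Lemma long_relation_word_generated r :
  relation_word R r -> 1 < size r -> generated mul one (indecomposable mul one) (phi r).
Proof.
move=> Hr Hsz; apply: generated_phi => s1 x s2 Er; rewrite Er in Hr Hsz.
apply/generated_gen/phi_letter_indecomposable => //.
exact: letter_of_long_relation_word Hr Hsz.
Qed.

Lemma letter_generated x : generated mul one (indecomposable mul one) (phi [:: x]).
Proof.
case: (one_or_indecomposable_or_split mul one (phi [:: x]))
  => [-> | [Hx | [p [q [Hp [Hq Epq]]]]]].
- exact: generated_one.
- exact: generated_gen.
case: (phi_surj p) => u Hu; case: (phi_surj q) => v Hv.
have Huv : phi [:: x] = phi (u ++ v) by rewrite phi_cat Hu Hv.
have Hsz : 1 < size (u ++ v).
  case: u Hu {Huv} => [|? u] Hu; first by case: Hp; rewrite -Hu.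
  case: v Hv => [|? v] Hv; first by case: Hq; rewrite -Hv.
  by rewrite size_cat /= addnS.
have := letter_or_relation_word_cong HC (phi_cong Huv) (or_introl (ex_intro _ x erefl)).
case=> [[y Ey] | Hr]; first by rewrite Ey in Hsz.
by rewrite Huv; apply: long_relation_word_generated.
Qed.

Lemma indecomposables_generate : generates mul one (indecomposable mul one).
Proof.
move=> m; case: (phi_surj m) => w <-.
by apply: generated_phi => *; apply: letter_generated.
Qed.

End Presented.

Theorem corollary1 (M : Type) (mul : M -> M -> M) (one : M)
  (HM : is_monoid mul one)
  (A : Type) (R : seq A * seq A -> Prop)
  (Hpres : presents mul one R) (HC2 : small_cancellation R 2) :
  generates mul one (indecomposable mul one) /\
  (forall S : M -> Prop, generates mul one S ->
     forall s, indecomposable mul one s -> S s).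
Proof.
split=> [|S HS s]; last exact: indecomposable_generated (HS s).
case: Hpres => phi [phi_nil [phi_cat [phi_surj phi_ker]]].
apply: (indecomposables_generate HM HC2 phi_nil phi_cat phi_surj).
by move=> u v /phi_ker.
Qed.
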